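(* Every $p$-stabilisation $\alpha_I$ of $\Pi$ which is of non-critical slope (i.e. $r_I<\#\mathrm{Crit}(\Pi)$) is of Shalika type.
   Context: Let $p$ be an odd prime and $n\ge 1$. Fix an isomorphism $\overline{\mathbb{Q}}_p\cong\mathbb{C}$; $v_p$ denotes the $p$-adic valuation on $\mathbb{C}_p$ normalised by $v_p(p)=1$. Let $\Pi$ be a cuspidal automorphic representation of $\mathrm{GL}_{2n}(\mathbb{A}_{\mathbb{Q}})$ which is cohomological with respect to an integral weight $\mu=(\mu_1,\dots,\mu_{2n})\in\mathbb{Z}^{2n}$, which is the transfer of a globally generic cuspidal automorphic representation of $\mathrm{GSpin}_{2n+1}(\mathbb{A}_{\mathbb{Q}})$, and which is unramified at $p$. Then $\mu$ is dominant ($\mu_1\ge\cdots\ge\mu_{2n}$) and pure: there is an integer $w$ (the purity weight) with $\mu_i+\mu_{2n+1-i}=w$ for all $i$. The Hodge–Tate weights are $h_i=\mu_i+2n-i$ ($1\le i\le 2n$). Set $\mathrm{Crit}(\Pi)=\{j\in\mathbb{Z}:\mu_n\ge j\ge\mu_{n+1}\}$, so $\#\mathrm{Crit}(\Pi)=h_n-h_{n+1}$. Write $\Pi_p\cong\mathrm{Ind}_{B(\mathbb{Q}_p)}^{\mathrm{GL}_{2n}(\mathbb{Q}_p)}(|\cdot|^{(2n-1)/2}\lambda_p)$ (normalised parabolic induction from the upper triangular Borel $B$) for an unramified character $\lambda_p$ of the diagonal torus; the Satake parameters are $\alpha_i=\lambda_{p,i}(p)$, where $\lambda_{p,i}$ is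 the $i$-th diagonal component. They are indexed so that $v_p(\alpha_1)\ge\cdots\ge v_p(\alpha_{2n})$ and $\alpha_i\alpha_{2n+1-i}=\lambda$ for all $i$, for a fixed $\lambda$ with $v_p(\lambda)=2n-1+w$ (possible by the transfer from $\mathrm{GSpin}_{2n+1}$). Known fact (Hida), used freely: the Newton polygon (the piecewise linear curve through $(0,0)$ and $(j,\sum_{i=1}^{j}v_p(\alpha_{2n+1-i}))$, $j=1,\dots,2n$) lies on or above the Hodge polygon (through $(0,0)$ and $(j,\sum_{i=1}^{j}h_{2n+1-i})$, $j=1,\dots,2n$), and their endpoints coincide. For $I=(i_1,\dots,i_n)$ with $1\le i_1<\dots<i_n\le 2n$ put $\alpha_I=\alpha_{i_1}\cdots\alpha_{i_n}$ (a ''$p$-stabilisation'') and $r_I=v_p(\alpha_I)-\sum_{i=n+1}^{2n}h_i$. $\alpha_I$ is of Shalika type if $I$ contains exactly one element of each pair $\{i,2n+1-i\}$, $i=1,\dots,n$; it is of non-critical slope if $r_I<\#\mathrm{Crit}(\Pi)$. *)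

(* Abstracted model: only the p-adic valuations of the
   Satake parameters and the weight mu enter the statement. *)
From HB Require Import structures.
From mathcomp Require Import all_boot all_order all_algebra.
Set Implicit Arguments. Unset Strict Implicit. Unset Printing Implicit Defensive.
Import Order.TTheory GRing.Theory Num.Theory.
Local Open Scope ring_scope.

(* Hodge--Tate weight h_i = mu_i + 2n - i  (1-based index i, 1 <= i <= 2n). *)
Definition hw (n : nat) (mu : nat -> int) (i : nat) : int :=
  mu i + ((2 * n)%N - i)%N%:Z.

Definition numCrit (n : nat) (mu : nat -> int) : int := hw n mu n - hw n mu n.+1.

Definition is_index_tuple (n : nat) (I : seq nat) : bool :=
  [&& size I == n, sorted ltn I & all (fun i => (1 <= i <= 2 * n)%N) I].

(* v_p(alpha_I) = sum_{i in I} v_p(alpha_i); vp i stands for v_p(alpha_i). *)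
Definition val_alphaI (vp : nat -> rat) (I : seq nat) : rat := \sum_(i <- I) vp i.

Definition rI (n : nat) (mu : nat -> int) (vp : nat -> rat) (I : seq nat) : rat :=
  val_alphaI vp I - (\sum_(n.+1 <= i < (2 * n).+1) hw n mu i)%:~R.

Definition non_critical_slope (n : nat) (mu : nat -> int) (vp : nat -> rat)
  (I : seq nat) : bool := rI n mu vp I < (numCrit n mu)%:~R.

Definition shalika_type (n : nat) (I : seq nat) : Prop :=
  forall i : nat, (1 <= i <= n)%N -> (i \in I) != (((2 * n).+1 - i)%N \in I).

(* Newton polygon (through (j, sum_{i=1}^j v_p(alpha_{2n+1-i}))) lies on or above
   the Hodge polygon (through (j, sum_{i=1}^j h_{2n+1-i})), endpoints coincide.
   Both are piecewise linear with vertices at integer abscissae, so this is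
   exactly the comparison at j = 0..2n. *)
Definition newton_above_hodge (n : nat) (mu : nat -> int) (vp : nat -> rat) : Prop :=
  (forall j : nat, (1 <= j <= 2 * n)%N ->
     (\sum_(1 <= i < j.+1) hw n mu ((2 * n).+1 - i)%N)%:~R
       <= \sum_(1 <= i < j.+1) vp ((2 * n).+1 - i)%N)
  /\ (\sum_(1 <= i < (2 * n).+1) hw n mu ((2 * n).+1 - i)%N)%:~R
       = \sum_(1 <= i < (2 * n).+1) vp ((2 * n).+1 - i)%N.

(* If I is not of Shalika type, a counting argument shows that I contains both
   members k, 2n+1-k of some pair.  Their Satake parameters contribute
   2n-1+w = h_n + h_{n+1} to v_p(alpha_I), and the remaining n-2 indices
   contribute at least the n-2 smallest valuations, hence (Newton above Hodge)
   at least h_{n+3} + ... + h_{2n}.  Therefore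
   r_I >= h_n + h_{n+1} - h_{n+1} - h_{n+2} = h_n - h_{n+2} >= h_n - h_{n+1},
   so alpha_I has critical slope. *)
From HB Require Import structures.
From mathcomp Require Import all_boot all_order all_algebra.
From mathcomp Require Import zify.
Import Order.TTheory GRing.Theory Num.Theory.
Local Open Scope ring_scope.
From Stdlib Require Import Classical.

Lemma big_nat_mirror (R : nmodType) (f : nat -> R) (M j : nat) : (j <= M)%N ->
  \sum_(1 <= i < j.+1) f (M.+1 - i)%N = \sum_(M.+1 - j <= i < M.+1) f i.
Proof.
elim: j => [|j IH] hj; first by rewrite !big_geq // subn0.
rewrite big_nat_recr //= IH; last by lia.
rewrite (@big_ltn _ _ _ (M.+1 - j.+1)); last by lia.
have -> : (M.+1 - j.+1).+1 = (M.+1 - j)%N by lia.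
by rewrite addrC.
Qed.

(* The left-hand side sums the size s smallest values v m, ..., v (m - size s + 1). *)
Lemma ler_sum_smallest (R : numDomainType) (v : nat -> R) (m : nat)
  (hv : forall i : nat, (1 <= i < m)%N -> v i.+1 <= v i) (s : seq nat) :
  uniq s -> all (fun i => (1 <= i <= m)%N) s ->
  \sum_(1 <= i < (size s).+1) v (m.+1 - i)%N <= \sum_(i <- s) v i.
Proof.
elim: m hv s => [|m IH] hv s us alls.
  case: s us alls => [|x s] _ /=; first by rewrite big_geq // big_nil.
  by case/andP => /andP [h1 h2]; move: h1 h2; lia.
have hv' : forall i : nat, (1 <= i < m)%N -> v i.+1 <= v i.
  by move=> i hi; apply: hv; lia.
case hin: (m.+1 \in s).
  have hs : size s = (size (rem m.+1 s)).+1.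
    by rewrite size_rem // prednK //; case: s hin {alls us}.
  have ha : all (fun i => (1 <= i <= m)%N) (rem m.+1 s).
    apply/allP => x; rewrite (mem_rem_uniq _ us) => /andP[hx1 hx2].
    by move/allP: alls => /(_ x hx2); move: hx1; lia.
  rewrite [X in _ <= X](big_rem m.+1) //= hs big_ltn // subSS subn0 big_add1.
  apply: lerD => //; apply: le_trans (IH hv' _ (rem_uniq _ us) ha).
  by apply: ler_sum => i _; rewrite subSS.
have ha : all (fun i => (1 <= i <= m)%N) s.
  apply/allP => x hx; move/allP: alls => /(_ x hx).
  have : x != m.+1 by apply/eqP => E; rewrite -E hx in hin.
  lia.
have hsz : (size s <= m)%N.
  rewrite -[m in (_ <= m)%N](size_iota 1); apply: uniq_leq_size => // x hx.
  by rewrite mem_iota; move/allP: ha => /(_ x hx); lia.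
apply: le_trans (IH hv' s us ha); apply: ler_sum_nat => i hi.
have -> : (m.+2 - i)%N = (m.+1 - i).+1 by lia.
by apply: hv; lia.
Qed.

Lemma index_tuple_uniq (n : nat) (I : seq nat) : is_index_tuple n I -> uniq I.
Proof. by case/and3P => _ /(sorted_uniq ltn_trans ltnn). Qed.

Lemma index_tuple_mirror_pair (n : nat) (I : seq nat) (i : nat) :
  is_index_tuple n I -> (1 <= i <= n)%N -> (i \in I) = (((2 * n).+1 - i)%N \in I) ->
  exists k, [/\ (1 <= k <= n)%N, k \in I & ((2 * n).+1 - k)%N \in I].
Proof.
move=> hI hi heq; case hiI: (i \in I); first by exists i; rewrite -heq.
have uI := @index_tuple_uniq n I hI.
case/and3P: hI => /eqP hsz _ /allP hall.
apply/not_all_not_ex => hno.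
(* Without a mirror pair, folding i to min(i, 2n+1-i) is injective on I, so it
   maps the n elements of I onto [1, n]. *)
pose f j := minn j ((2 * n).+1 - j)%N.
have finj : {in I &, injective f}.
  move=> a b ha hb hf; have := hall a ha; have := hall b hb => hb' ha'.
  have hna := hno a; have hnb := hno b.
  case: (ltnP n a) => ha2; case: (ltnP n b) => hb2; rewrite /f in hf.
  - by move: hf; lia.
  - have E : ((2 * n).+1 - b)%N = a by move: hf; lia.
    by exfalso; apply: hnb; split => //; [lia | rewrite E].
  - have E : ((2 * n).+1 - a)%N = b by move: hf; lia.
    by exfalso; apply: hna; split => //; [lia | rewrite E].
  - by move: hf; lia.
have sub : {subset map f I <= iota 1 n}.
  by move=> x /mapP[a /hall ha ->]; rewrite mem_iota /f; lia.
have hsz' : (size (iota 1 n) <= size (map f I))%N by rewrite size_iota size_map hsz.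
have [_ eqs] := uniq_min_size (etrans (map_inj_in_uniq finj) uI) sub hsz'.
have : i \in map f I by rewrite eqs mem_iota; lia.
case/mapP => a ha hfa; have := hall a ha.
case: (ltnP n a) => ha2 ha'.
- have E : a = ((2 * n).+1 - i)%N by move: hfa; rewrite /f; lia.
  by move: ha; rewrite E -heq hiI.
- have E : a = i by move: hfa; rewrite /f; lia.
  by rewrite -E ha in hiI.
Qed.

Lemma index_tuple_mirror_pair_ge2 (n : nat) (I : seq nat) (k : nat) :
  is_index_tuple n I -> (1 <= k <= n)%N -> k \in I -> ((2 * n).+1 - k)%N \in I ->
  (2 <= n)%N.
Proof.
case/and3P => /eqP hsz _ _ hk hkI hmI.
have hpair : uniq [:: k; ((2 * n).+1 - k)%N] by rewrite /= inE andbT; apply/eqP; lia.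
rewrite -hsz (uniq_leq_size hpair) // => x.
by rewrite !inE => /orP[] /eqP ->.
Qed.

Section HodgeWeights.

Variables (n : nat) (mu : nat -> int) (w : int).
Hypothesis hdom : forall i : nat, (1 <= i < 2 * n)%N -> mu i.+1 <= mu i.
Hypothesis hpure :
  forall i : nat, (1 <= i <= 2 * n)%N -> mu i + mu ((2 * n).+1 - i)%N = w.

Lemma hw_ltn (i : nat) : (1 <= i < 2 * n)%N -> hw n mu i.+1 < hw n mu i.
Proof. by move=> hi; have := hdom i hi; rewrite /hw; lia. Qed.

Lemma hw_pure (i : nat) : (1 <= i <= 2 * n)%N ->
  hw n mu i + hw n mu ((2 * n).+1 - i)%N = ((2 * n).-1)%:Z + w.
Proof. by move=> hi; have := hpure i hi; rewrite /hw; lia. Qed.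

Lemma sum_hw_top : (2 <= n)%N ->
  \sum_(n.+1 <= i < (2 * n).+1) hw n mu i =
    hw n mu n.+1 + hw n mu n.+2 + \sum_(1 <= i < (n - 2).+1) hw n mu ((2 * n).+1 - i)%N.
Proof.
move=> hn2; rewrite big_nat_mirror; last by lia.
have -> : ((2 * n).+1 - (n - 2))%N = n.+3 by lia.
by rewrite big_ltn 1?big_ltn ?addrA //; lia.
Qed.

End HodgeWeights.

Section CriticalSlope.

Variables (n : nat) (mu : nat -> int) (w : int) (vp : nat -> rat).
Hypothesis hdom : forall i : nat, (1 <= i < 2 * n)%N -> mu i.+1 <= mu i.
Hypothesis hpure :
  forall i : nat, (1 <= i <= 2 * n)%N -> mu i + mu ((2 * n).+1 - i)%N = w.
Hypothesis hord : forall i : nat, (1 <= i < 2 * n)%N -> vp i.+1 <= vp i.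
Hypothesis hpair : forall i : nat, (1 <= i <= 2 * n)%N ->
  vp i + vp ((2 * n).+1 - i)%N = ((2 * n).-1)%:R + w%:~R.
Hypothesis hNH : newton_above_hodge n mu vp.

Variables (I : seq nat) (k : nat).
Hypothesis hI : is_index_tuple n I.
Hypothesis hk : (1 <= k <= n)%N.
Hypothesis hkI : k \in I.
Hypothesis hmI : ((2 * n).+1 - k)%N \in I.

Lemma val_alphaI_mirror_pair_ge :
  ((2 * n).-1)%:R + w%:~R
    + (\sum_(1 <= i < (n - 2).+1) hw n mu ((2 * n).+1 - i)%N)%:~R
  <= val_alphaI vp I.
Proof.
have uI := @index_tuple_uniq n I hI.
have hn2 := @index_tuple_mirror_pair_ge2 n I k hI hk hkI hmI.
case/and3P: hI => /eqP hsz _ /allP hall.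
set m := ((2 * n).+1 - k)%N.
have hm : m \in rem k I by rewrite (mem_rem_uniq _ uI) inE hmI andbT; apply/eqP; lia.
set J := rem m (rem k I).
have uJ : uniq J by do 2 apply: rem_uniq.
have hszJ : size J = (n - 2)%N by rewrite size_rem // size_rem // hsz; lia.
have allJ : all (fun i => (1 <= i <= 2 * n)%N) J.
  apply/allP => x /mem_rem /mem_rem; exact: hall.
have -> : val_alphaI vp I = ((2 * n).-1)%:R + w%:~R + \sum_(i <- J) vp i.
  by rewrite /val_alphaI (big_rem k) // (big_rem m) //= addrA hpair //; lia.
rewrite lerD2l; apply: le_trans (@ler_sum_smallest _ vp _ hord J uJ allJ); rewrite hszJ.
case: (posnP (n - 2)) => [-> | hpos]; first by rewrite !big_geq.
by apply: hNH.1; lia.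
Qed.

Lemma mirror_pair_critical_slope : (numCrit n mu)%:~R <= rI n mu vp I.
Proof.
have hn2 := @index_tuple_mirror_pair_ge2 n I k hI hk hkI hmI.
have hval := val_alphaI_mirror_pair_ge.
set H := \sum_(1 <= i < (n - 2).+1) hw n mu ((2 * n).+1 - i)%N.
have hmid : hw n mu n + hw n mu n.+1 = ((2 * n).-1)%:Z + w.
  have -> : n.+1 = ((2 * n).+1 - n)%N by lia.
  by apply: (@hw_pure n mu w hpure); lia.
have hdec : hw n mu n.+2 <= hw n mu n.+1.
  by apply/ltW/(@hw_ltn n mu hdom n.+1); lia.
have hint : hw n mu n - hw n mu n.+1 + (hw n mu n.+1 + hw n mu n.+2 + H)
            <= ((2 * n).-1)%:Z + w + H.
  rewrite -hmid; move: hdec.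
  by move: (hw n mu n) (hw n mu n.+1) (hw n mu n.+2) H => a b c h; lia.
rewrite /rI /numCrit (@sum_hw_top n mu hn2) lerBrDr; apply: le_trans hval.
by rewrite pmulrn -!intrD ler_int.
Qed.

End CriticalSlope.

Theorem mainTheorem2
  (n : nat) (mu : nat -> int) (w : int) (vp : nat -> rat)
  (hn : (1 <= n)%N)
  (hdom : forall i : nat, (1 <= i < 2 * n)%N -> mu i.+1 <= mu i)
  (hpure : forall i : nat, (1 <= i <= 2 * n)%N -> mu i + mu ((2 * n).+1 - i)%N = w)
  (hord : forall i : nat, (1 <= i < 2 * n)%N -> vp i.+1 <= vp i)
  (hpair : forall i : nat, (1 <= i <= 2 * n)%N ->
             vp i + vp ((2 * n).+1 - i)%N = ((2 * n).-1)%:R + w%:~R)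
  (hNH : newton_above_hodge n mu vp)
  (I : seq nat) (hI : is_index_tuple n I) :
  non_critical_slope n mu vp I -> shalika_type n I.
Proof.
move=> hnc i hi; apply/negP => /eqP heq.
have [k [hk hkI hmI]] := @index_tuple_mirror_pair n I i hI hi heq.
have := @mirror_pair_critical_slope _ _ _ _ hdom hpure hord hpair hNH _ _ hI hk hkI hmI.
by rewrite leNgt -/(non_critical_slope n mu vp I) hnc.
Qed.
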